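(* Let $\mathfrak{S}=(\mathcal{X},\mathsf{S},\gamma,(\Lambda_{a})_{a\in\mathcal{A}})$ be a spectral decomposition system for the Euclidean space $\mathfrak{H}$ and let $\Phi\colon\mathfrak{H}\to[-\infty,+\infty]$. Then the following are equivalent: (i) for all $X,Y\in\mathfrak{H}$, $\gamma(X)=\gamma(Y)$ implies $\Phi(X)=\Phi(Y)$; (ii) $\Phi\circ\Lambda_a=\Phi\circ\Lambda_b$ for all $a,b\in\mathcal{A}$; (iii) there exists an $\mathsf{S}$-invariant function $\varphi\colon\mathcal{X}\to[-\infty,+\infty]$ such that $\Phi=\varphi\circ\gamma$. Moreover, if (iii) holds, then $\varphi=\Phi\circ\Lambda_a$ for every $a\in\mathcal{A}$.
   Context: A Euclidean space is a finite-dimensional real inner product space; inner products are written $\langle\cdot,\cdot\rangle$ and norms $\|\cdot\|$. Let $\mathfrak{H}$ and $\mathcal{X}$ be Euclidean spaces, let $\mathsf{S}$ be a group acting on $\mathcal{X}$ by linear isometries, let $\gamma\colon\mathfrak{H}\to\mathcal{X}$, and let $(\Lambda_a)_{a\in\mathcal{A}}$ be a family of linear operators from $\mathcal{X}$ to $\mathfrak{H}$. The orbit of $x$ is $\mathsf{S}\cdot x=\{s\cdot x: s\in\mathsf{S}\}$; a map $f$ on $\mathcal{X}$ is $\mathsf{S}$-invariant if $f(s\cdot x)=f(x)$ for all $s,x$. The tuple is a spectral decomposition system for $\mathfrak{H}$ if: [A] every $\Lambda_a$ is an isometry; [B] there exists an $\mathsf{S}$-invariant $\tau\colon\mathcal{X}\to\mathcal{X}$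 with $\tau(x)\in\mathsf{S}\cdot x$ for all $x$ and $\gamma\circ\Lambda_a=\tau$ for all $a$; [C] for every $X\in\mathfrak{H}$ there is $a$ with $X=\Lambda_a\gamma(X)$; [D] $\langle X,Y\rangle\leq\langle\gamma(X),\gamma(Y)\rangle$ for all $X,Y\in\mathfrak{H}$. *)

From HB Require Import structures.
From mathcomp Require Import all_boot all_order all_algebra.
From mathcomp Require Import reals constructive_ereal.
Set Implicit Arguments. Unset Strict Implicit. Unset Printing Implicit Defensive.
Import Order.TTheory GRing.Theory Num.Theory.
Local Open Scope ring_scope.

Section Defs.
Variable R : realType.

(* ip is a real inner product on the (finite-dimensional) space V:
   bilinear (linear in the first argument + symmetric), positive definite. *)
Definition inner_product (V : vectType R) (ip : V -> V -> R) : Prop :=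
  [/\ forall x y, ip x y = ip y x,
      forall (c : R) x y z, ip (c *: x + y) z = c * ip x z + ip y z,
      forall x, 0 <= ip x x
    & forall x, ip x x = 0 -> x = 0].

Definition ipnorm (V : vectType R) (ip : V -> V -> R) (x : V) : R :=
  Num.sqrt (ip x x).

Definition is_linear (U V : vectType R) (f : U -> V) : Prop :=
  forall (c : R) x y, f (c *: x + y) = c *: f x + f y.

Definition linear_isometry (U V : vectType R) (ipU : U -> U -> R)
  (ipV : V -> V -> R) (f : U -> V) : Prop :=
  is_linear f /\ forall x, ipnorm ipV (f x) = ipnorm ipU x.

Definition is_group (G : Type) (mul : G -> G -> G) (e : G) (inv : G -> G)
  : Prop :=
  [/\ forall s t u, mul s (mul t u) = mul (mul s t) u,
      forall s, mul e s = s /\ mul s e = s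
    & forall s, mul (inv s) s = e /\ mul s (inv s) = e].

Definition acts_by_linear_isometries (X : vectType R) (ipX : X -> X -> R)
  (G : Type) (mul : G -> G -> G) (e : G) (inv : G -> G)
  (act : G -> X -> X) : Prop :=
  [/\ is_group mul e inv,
      forall x, act e x = x,
      forall s t x, act (mul s t) x = act s (act t x)
    & forall s, linear_isometry ipX ipX (act s)].

Definition in_orbit (X : vectType R) (G : Type) (act : G -> X -> X)
  (x x' : X) : Prop := exists s : G, x' = act s x.

Definition S_invariant (X : vectType R) (G : Type) (act : G -> X -> X)
  (T : Type) (f : X -> T) : Prop := forall s x, f (act s x) = f x.

Definition spectral_decomposition_system
  (H : vectType R) (ipH : H -> H -> R)
  (X : vectType R) (ipX : X -> X -> R)
  (G : Type) (act : G -> X -> X)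
  (gamma : H -> X) (A : Type) (Lam : A -> X -> H) : Prop :=
  [/\ forall a, linear_isometry ipX ipH (Lam a),
      (exists tau : X -> X,
                   [/\ S_invariant act tau,
                       forall x, in_orbit act x (tau x)
                     & forall a, gamma \o Lam a = tau]),
      (forall Y : H, exists a, Y = Lam a (gamma Y))
    & forall Y Z : H, ipH Y Z <= ipX (gamma Y) (gamma Z)].

End Defs.

(** Every [Y] equals [Lam a (gamma Y)] for some [a], while [gamma \o Lam a]
    is one and the same orbit-selecting map [tau] for all [a].  Hence [Phi]
    factors through [gamma] exactly when all the [Phi \o Lam a] coincide, the
    common value being the factor; it is [S]-invariant because it is
    [tau]-invariant and [tau] is [S]-invariant.  Conversely an [S]-invariant
    factor [phi] satisfies [phi (tau x) = phi x], which forces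
    [phi = Phi \o Lam a]. *)
From Pilot Require Import Defs.
From HB Require Import structures.
From mathcomp Require Import all_boot all_order all_algebra.
From mathcomp Require Import reals constructive_ereal.
From mathcomp Require boolp.
Set Implicit Arguments. Unset Strict Implicit. Unset Printing Implicit Defensive.
Import Order.TTheory GRing.Theory Num.Theory.
Local Open Scope ring_scope.

Section SpectralInvariance.
Variables (R : realType) (H X : vectType R) (G A T : Type).
Variables (act : G -> X -> X) (gamma : H -> X) (Lam : A -> X -> H).
Variable tau : X -> X.

Hypothesis tau_invariant : S_invariant act tau.
(* [Defs.] because fingraph's [in_orbit] shadows the predicate of Defs. *)
Hypothesis tau_in_orbit : forall x, Defs.in_orbit act x (tau x).
Hypothesis gamma_Lam : forall a, gamma \o Lam a = tau.
Hypothesis Lam_gamma : forall Y, exists a, Y = Lam a (gamma Y).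

Lemma S_invariant_orbit (phi : X -> T) x y :
  S_invariant act phi -> Defs.in_orbit act x y -> phi y = phi x.
Proof. by move=> phi_inv [s ->]. Qed.

Lemma gamma_LamE a x : gamma (Lam a x) = tau x.
Proof. by rewrite -(gamma_Lam a). Qed.

Lemma S_invariant_tau (phi : X -> T) x : S_invariant act phi -> phi (tau x) = phi x.
Proof. by move=> phi_inv; apply: S_invariant_orbit. Qed.

Lemma S_invariant_of_tau (f : X -> T) :
  (forall x, f (tau x) = f x) -> S_invariant act f.
Proof. by move=> f_tau s x; rewrite -f_tau tau_invariant f_tau. Qed.

Lemma factor_Lam (phi : X -> T) (Phi : H -> T) :
  S_invariant act phi -> Phi = phi \o gamma -> forall a, Phi \o Lam a = phi.
Proof.
move=> phi_inv -> a; apply: boolp.funext => x /=.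
by rewrite gamma_LamE S_invariant_tau.
Qed.

Lemma Lam_comp_eq_of_gamma (Phi : H -> T) :
  (forall Y Z, gamma Y = gamma Z -> Phi Y = Phi Z) ->
  forall a b, Phi \o Lam a = Phi \o Lam b.
Proof.
move=> Phi_gamma a b; apply: boolp.funext => x /=.
by apply: Phi_gamma; rewrite !gamma_LamE.
Qed.

Lemma factor_gamma (Phi : H -> T) a0 :
  (forall a b, Phi \o Lam a = Phi \o Lam b) -> Phi = (Phi \o Lam a0) \o gamma.
Proof.
move=> Lam_eq; apply: boolp.funext => Y.
have [a {1}->] := Lam_gamma Y.
by rewrite -[LHS]/((Phi \o Lam a) (gamma Y)) (Lam_eq a a0).
Qed.

Lemma factor_gamma_invariant (Phi : H -> T) a :
  Phi = (Phi \o Lam a) \o gamma -> S_invariant act (Phi \o Lam a).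
Proof.
move=> Phi_factor; apply: S_invariant_of_tau => x /=.
by rewrite -(gamma_LamE a) {2}Phi_factor.
Qed.

End SpectralInvariance.

Theorem proposition4p1 (R : realType)
  (H : vectType R) (ipH : H -> H -> R) (hH : inner_product ipH)
  (X : vectType R) (ipX : X -> X -> R) (hX : inner_product ipX)
  (G : Type) (mul : G -> G -> G) (e : G) (inv : G -> G) (act : G -> X -> X)
  (hact : acts_by_linear_isometries ipX mul e inv act)
  (gamma : H -> X) (A : Type) (Lam : A -> X -> H)
  (hsds : spectral_decomposition_system ipH ipX act gamma Lam)
  (Phi : H -> \bar R) :
  [/\ ((forall Y Z : H, gamma Y = gamma Z -> Phi Y = Phi Z) <->
       (forall a b : A, Phi \o Lam a = Phi \o Lam b)),
      ((forall a b : A, Phi \o Lam a = Phi \o Lam b) <->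
       (exists phi : X -> \bar R, S_invariant act phi /\ Phi = phi \o gamma))
    & forall phi : X -> \bar R, S_invariant act phi -> Phi = phi \o gamma ->
        forall a : A, phi = Phi \o Lam a].
Proof.
case: hsds => _ [tau [tau_inv tau_orbit gamma_Lam]] Lam_gamma _.
have [a0 _] := Lam_gamma 0.
have factor_of_Lam_eq : (forall a b, Phi \o Lam a = Phi \o Lam b) ->
    exists phi, S_invariant act phi /\ Phi = phi \o gamma.
  move=> Lam_eq; have Phi_factor := factor_gamma Lam_gamma a0 Lam_eq.
  by exists (Phi \o Lam a0); split=> //; apply: factor_gamma_invariant Phi_factor.
split; [split | split | ].
- exact: Lam_comp_eq_of_gamma.
- by move=> /factor_of_Lam_eq [phi [_ ->]] Y Z /= ->.
- exact: factor_of_Lam_eq.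
- case=> phi [phi_inv Phi_factor] a b.
  by rewrite !(factor_Lam tau_orbit gamma_Lam phi_inv Phi_factor).
- move=> phi phi_inv Phi_factor a.
  by rewrite (factor_Lam tau_orbit gamma_Lam phi_inv Phi_factor).
Qed.
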